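(* Let $\mathcal{F}=\langle\mathbb{A},(\mu_i)_{i\in\mathsf{Ag}}\rangle$ be an APE-structure and $\mathbb{E}=(E,(\sim_i),(P_i),\Phi,\mathsf{pre})$ a probabilistic event structure over $\mathbb{A}$. Then for every $a\in\Phi$ and every $i\in\mathsf{Ag}$, the partial map $\mu^a_i$ is an $i$-premeasure on $\mathbb{A}$. Furthermore, if $a\leq y$ then $\mu^a_i(x)=\mu^a_i(x\wedge y)$ (for $x$ in the domain of $\mu^a_i$).
   Context: Fix a set $\mathsf{Ag}$ of agents. A monadic Heyting algebra is a Heyting algebra $\mathbb{L}$ with, for each $i\in\mathsf{Ag}$, monotone unary operations $\lozenge_i,\Box_i$ such that for all $a,b$: $a\leq\lozenge_i a$; $\Box_i a\leq a$; $\lozenge_i(a\vee b)\leq\lozenge_i a\vee\lozenge_i b$; $\Box_i(a\to b)\leq\Box_i a\to\Box_i b$; $\lozenge_i a\leq\Box_i\lozenge_i a$; $\lozenge_i\Box_i a\leq\Box_i a$; $\Box_i(a\to b)\leq\lozenge_i a\to\lozenge_i b$; $\lozenge_i\bot\leq\bot$; $\top\leq\Box_i\top$. An epistemic Heyting algebra is a finite monadic Heyting algebra with $\lozenge_i a\vee\neg\lozenge_i a=\top$ for all $i,a$. An element $a$ is $i$-minimal if $a\neq\bot$, $\lozenge_i a=a$, and whenever $b<a$ and $\lozenge_i b=b$ then $b=\bot$; $\mathsf{Min}_i(\mathbb{A})$ is the set of $i$-minimal elements and $\mathsf{Min}_i(\mathbb{A}){\downarrow}$ its down-set. A partial map $\mu:\mathbb{A}\to\mathbb{R}^+$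 is an $i$-premeasure if: (1) $\mathsf{dom}(\mu)=\mathsf{Min}_i(\mathbb{A}){\downarrow}$; (2) $\mu$ is order-preserving; (3) for every $a\in\mathsf{Min}_i(\mathbb{A})$ and all $b,c\leq a$, $\mu(b\vee c)=\mu(b)+\mu(c)-\mu(b\wedge c)$; (4) $\mu(\bot)=0$ if $\mathsf{dom}(\mu)\neq\varnothing$. It is an $i$-measure if moreover (5) for every $a\in\mathsf{Min}_i(\mathbb{A})$ and all $b,c\leq a$ with $b<c$, $\mu(b)<\mu(c)$; and (6) $\mu(a)=1$ for every $a\in\mathsf{Min}_i(\mathbb{A})$. An APE-structure is a pair $\langle\mathbb{A},(\mu_i)_{i\in\mathsf{Ag}}\rangle$ with $\mathbb{A}$ an epistemic Heyting algebra and each $\mu_i$ an $i$-measure on $\mathbb{A}$. A pre-ordered multiset on a set $X$ is a multiset of elements of $X$ in which the copies $x_1,\dots,x_n$ of any element carry the linear order $x_1\prec\cdots\prec x_n$. A probabilistic event structure over $\mathbb{A}$ is a tuple $(E,(\sim_i),(P_i),\Phi,\mathsf{pre})$: $E$ non-empty finite; each $\sim_i$ an equivalence relation on $E$; each $P_i:E\to\,]0,1]$ with $\sum\{P_i(e')\mid e'\sim_i e\}=1$; $\Phi$ a finite pre-ordered multiset on $\mathbb{A}$ such that any $a,b\in\Phi$ arising from distinct elements satisfy $a\wedge b=\bot$ or $a<b$ or $b<a$; $\mathsf{pre}(\bullet\mid a)$ a probability distribution on $E$ for each $a\in\Phi$; and if $\mathsf{pre}(e\mid a)=0$ then $\mathsf{pre}(e\mid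 b)=0$ for all $b\in\Phi$ with $a<b$ (distinct elements) or $a\prec b$ (copies). For $a\in\Phi$, $\mathrm{mb}(a)$ denotes the set of maximal elements of $\Phi\cap({\downarrow}a\setminus\{a\})$, and $\mu^a_i:\mathbb{A}\to\mathbb{R}^+$ is the partial function $\mu^a_i(x):=\mu_i(x\wedge a)-\sum_{b\in\mathrm{mb}(a)}\mu_i(x\wedge b)$, defined for $x\in\mathsf{Min}_i(\mathbb{A}){\downarrow}$. *)

From HB Require Import structures.
From mathcomp Require Import all_boot all_order all_algebra.
From mathcomp Require Import reals.

Set Implicit Arguments.
Unset Strict Implicit.
Unset Printing Implicit Defensive.

Import Order.TTheory GRing.Theory Num.Theory.
Local Open Scope order_scope.

Section Defs.
Variables (Ag : Type) (d : Order.disp_t) (A : finTBDistrLatticeType d).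

Definition is_heyting_imp (imp : A -> A -> A) : Prop :=
  forall a b c : A, (c <= imp a b) = (c `&` a <= b).

Definition hneg (imp : A -> A -> A) (a : A) : A := imp a \bot.

Definition is_monadic_HA (imp : A -> A -> A) (dia box : Ag -> A -> A) : Prop :=
  [/\ is_heyting_imp imp,
      forall i, {homo dia i : x y / x <= y},
      forall i, {homo box i : x y / x <= y} &
      forall i (a b : A),
      (a <= dia i a) /\ (box i a <= a) /\
      (dia i (a `|` b) <= dia i a `|` dia i b) /\
      (box i (imp a b) <= imp (box i a) (box i b)) /\
      (dia i a <= box i (dia i a)) /\
      (dia i (box i a) <= box i a) /\
      (box i (imp a b) <= imp (dia i a) (dia i b)) /\
      (dia i \bot <= \bot) /\
      (\top <= box i \top)].

(* finiteness is carried by the finType structure of A *)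
Definition is_epistemic_HA (imp : A -> A -> A) (dia box : Ag -> A -> A) : Prop :=
  is_monadic_HA imp dia box /\
  forall i (a : A), dia i a `|` hneg imp (dia i a) = \top.

Definition i_minimal (dia : Ag -> A -> A) (i : Ag) (a : A) : bool :=
  [&& a != \bot, dia i a == a &
      [forall b : A, ((b < a) && (dia i b == b)) ==> (b == \bot)]].

Definition in_mindown (dia : Ag -> A -> A) (i : Ag) (x : A) : bool :=
  [exists m : A, i_minimal dia i m && (x <= m)].

Variable R : realType.
Local Open Scope ring_scope.

(* A partial map A -> R^+ with domain Min_i(A)↓ is represented by a total
   function mu : A -> R whose values outside Min_i(A)↓ are irrelevant. *)
Definition is_premeasure (dia : Ag -> A -> A) (i : Ag) (mu : A -> R) : Prop :=
  [/\ (forall x, in_mindown dia i x -> 0 <= mu x),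
      (forall x y, in_mindown dia i x -> in_mindown dia i y ->
                   (x <= y)%O -> mu x <= mu y),
      (forall a, i_minimal dia i a -> forall b c, (b <= a)%O -> (c <= a)%O ->
          mu (b `|` c)%O = mu b + mu c - mu (b `&` c)%O) &
      ((exists x, in_mindown dia i x) -> mu \bot%O = 0)].

Definition is_measure (dia : Ag -> A -> A) (i : Ag) (mu : A -> R) : Prop :=
  [/\ is_premeasure dia i mu,
      (forall a, i_minimal dia i a -> forall b c, (b <= a)%O -> (c <= a)%O ->
          (b < c)%O -> mu b < mu c) &
      (forall a, i_minimal dia i a -> mu a = 1)].

Definition is_APE_structure (imp : A -> A -> A) (dia box : Ag -> A -> A)
  (mu : Ag -> A -> R) : Prop :=
  is_epistemic_HA imp dia box /\ forall i, is_measure dia i (mu i).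

(* The finite pre-ordered multiset Phi
   is given as a sequence: its entries are the elements of the multiset, and
   copies of the same element are linearly ordered by their position in the
   sequence.  pre j is the distribution pre(. | Phi`_j). *)
Definition is_prob_event_structure (E : finType) (sim : Ag -> rel E)
  (P : Ag -> E -> R) (Phi : seq A) (pre : 'I_(size Phi) -> E -> R) : Prop :=
  [/\ (0 < #|E|)%N,
      (forall i, equivalence_rel (sim i)),
      (forall i e, 0 < P i e <= 1) &
      (forall i e, \sum_(e' | sim i e' e) P i e' = 1)] /\
  [/\ (forall j k : 'I_(size Phi), nth \bot%O Phi j != nth \bot%O Phi k ->
          [\/ (nth \bot Phi j `&` nth \bot Phi k = \bot)%O,
              (nth \bot Phi j < nth \bot Phi k)%O |
              (nth \bot Phi k < nth \bot Phi j)%O]),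
      (forall j, (forall e, 0 <= pre j e) /\ \sum_e pre j e = 1) &
      (forall (j k : 'I_(size Phi)) e, pre j e = 0 ->
          ((nth \bot Phi j < nth \bot Phi k)%O \/
           (nth \bot%O Phi j = nth \bot%O Phi k /\ (j < k)%N)) ->
          pre k e = 0)].

Definition mb (Phi : seq A) (a : A) : {set A} :=
  [set b : A | [&& b \in Phi, (b < a)%O &
     [forall c : A, ((c \in Phi) && (b < c)%O && (c < a)%O) ==> false]]].

Definition mu_sup (mu : Ag -> A -> R) (i : Ag) (Phi : seq A) (a : A) (x : A) : R :=
  mu i (x `&` a)%O - \sum_(b in mb Phi a) mu i (x `&` b)%O.

End Defs.

(* On the down-set of an i-minimal element m the premeasure mu_i is modular, and
   the maximal elements of Phi strictly below a are pairwise disjoint, because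
   distinct elements of Phi are either disjoint or strictly comparable.  Hence
   the sum in mu^a_i collapses: mu^a_i(x) = mu_i(x /\ a) - mu_i(x /\ B) with
   B the join of mb(a), and B <= a.  A difference of two modular functions is
   modular, it is monotone because B <= a, it vanishes at bottom, and it only
   sees x through x /\ a, which is unchanged by meeting with any y >= a. *)

From HB Require Import structures.
From mathcomp Require Import all_boot all_order all_algebra.
From mathcomp Require Import reals.
From mathcomp Require Import lra.

Set Implicit Arguments.
Unset Strict Implicit.
Unset Printing Implicit Defensive.

Import Order.TTheory GRing.Theory Num.Theory.

Local Open Scope order_scope.

Section ModularBelow.
Variables (d : Order.disp_t) (A : finTBDistrLatticeType d) (R : realType).
Variables (mu : A -> R) (m : A).

Definition modular_below (f : A -> R) : Prop :=
  forall b c, b <= m -> c <= m -> f (b `|` c) = (f b + f c - f (b `&` c))%R.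

Hypothesis mu_modular : modular_below mu.
Hypothesis mu_bot : mu \bot = 0%R.
Hypothesis mu_mono : forall x y, x <= y -> y <= m -> (mu x <= mu y)%R.

Lemma modular_below_meet c : modular_below (fun x => mu (x `&` c)).
Proof.
move=> x y xm ym /=; rewrite meetUl mu_modular; last 2 first.
- exact: le_trans (leIl _ _) xm.
- exact: le_trans (leIl _ _) ym.
by rewrite meetACA meetxx.
Qed.

Lemma sum_meet_disjoint (B : {set A}) x :
  {in B &, forall b c, b != c -> b `&` c = \bot} -> x <= m ->
  (\sum_(b in B) mu (x `&` b))%R = mu (x `&` \join_(b in B) b).
Proof.
have [n] := ubnP #|B|; elim: n B => // n IH B /ltnSE leBn disjB xm.
have [-> | [b bB]] := set_0Vmem B; first by rewrite !big_set0 meetx0 mu_bot.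
have bJ : b `&` \join_(c in B :\ b) c = \bot.
  apply: joins_disjoint => c; rewrite !inE => /andP [cb cB].
  by apply: disjB; rewrite // eq_sym.
rewrite (big_setD1 _ bB) [in RHS](big_setD1 _ bB) /= meetUr mu_modular; last 2 first.
- exact: le_trans (leIl _ _) xm.
- exact: le_trans (leIl _ _) xm.
rewrite IH //; last 2 first.
- by rewrite (leq_trans _ leBn) // (cardsD1 b B) bB.
- by move=> c c' /setD1P [_ cB] /setD1P [_ c'B]; apply: disjB.
have -> : (x `&` b) `&` (x `&` \join_(c in B :\ b) c) = \bot.
  by rewrite meetACA meetxx bJ meetx0.
by rewrite mu_bot subr0.
Qed.

Lemma le_sub_meet b c x y : b <= c -> x <= y -> y <= m ->
  (mu (x `&` c) - mu (x `&` b) <= mu (y `&` c) - mu (y `&` b))%R.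
Proof.
move=> bc xy ym.
have cover : (x `&` c) `|` (y `&` b) <= y `&` c by rewrite leUx !leI2.
have overlap : (x `&` c) `&` (y `&` b) = x `&` b.
  by rewrite meetACA (meet_l xy) (meet_idPr bc).
have := mu_mono cover (le_trans (leIl _ _) ym).
rewrite mu_modular ?overlap; first lra.
- exact: le_trans (leIl _ _) (le_trans xy ym).
- exact: le_trans (leIl _ _) ym.
Qed.

End ModularBelow.

Section MaximalBelow.
Variables (d : Order.disp_t) (A : finTBDistrLatticeType d) (Phi : seq A).

Definition laminar : Prop :=
  {in Phi &, forall b c, b != c -> [\/ b `&` c = \bot, b < c | c < b]}.

Lemma laminar_nth :
  (forall j k : 'I_(size Phi), nth \bot Phi j != nth \bot Phi k ->
     [\/ nth \bot Phi j `&` nth \bot Phi k = \bot,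
         nth \bot Phi j < nth \bot Phi k |
         nth \bot Phi k < nth \bot Phi j]) ->
  laminar.
Proof.
move=> Hnth b c bPhi cPhi.
have jb : (index b Phi < size Phi)%N by rewrite index_mem.
have jc : (index c Phi < size Phi)%N by rewrite index_mem.
by have := Hnth (Ordinal jb) (Ordinal jc); rewrite /= !nth_index.
Qed.

Lemma mb_lt a b : b \in mb Phi a -> b < a.
Proof. by rewrite inE => /and3P []. Qed.

Lemma join_mb_le a : \join_(b in mb Phi a) b <= a.
Proof. by apply/joinsP => b /mb_lt /ltW. Qed.

Lemma mb_disjoint a : laminar ->
  {in mb Phi a &, forall b c, b != c -> b `&` c = \bot}.
Proof.
move=> lamPhi b c; rewrite !inE => /and3P [bPhi ba /forallP bmax].
move=> /and3P [cPhi ca /forallP cmax] bc.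
case: (lamPhi b c bPhi cPhi bc) => [// | lt | lt].
- by move: (bmax c); rewrite cPhi lt ca.
- by move: (cmax b); rewrite bPhi lt ba.
Qed.

End MaximalBelow.

Section MuSup.
Variables (Ag : Type) (d : Order.disp_t) (A : finTBDistrLatticeType d).
Variables (R : realType) (dia : Ag -> A -> A) (i : Ag) (mu : Ag -> A -> R).
Variables (Phi : seq A) (a : A).

Hypothesis mu_pre : is_premeasure dia i (mu i).
Hypothesis Phi_laminar : laminar Phi.

Lemma in_mindownP x :
  reflect (exists2 m, i_minimal dia i m & x <= m) (in_mindown dia i x).
Proof.
apply: (iffP existsP) => [[m /andP [] ] | [m mm xm]]; first by exists m.
by exists m; rewrite mm.
Qed.

Local Notation B := (\join_(b in mb Phi a) b).

Lemma mu_supE x m : i_minimal dia i m -> x <= m ->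
  mu_sup mu i Phi a x = (mu i (x `&` a) - mu i (x `&` B))%R.
Proof.
case: mu_pre => _ _ mu_modular mu_bot mm xm.
have mu_bot_m : mu i \bot = 0%R.
  by apply: mu_bot; exists m; apply/in_mindownP; exists m.
by rewrite /mu_sup (sum_meet_disjoint (mu_modular m mm) mu_bot_m (mb_disjoint (a := a) Phi_laminar) xm).
Qed.

Lemma mu_sup_premeasure : is_premeasure dia i (mu_sup mu i Phi a).
Proof.
have [_ mu_mono mu_modular _] := mu_pre.
have mu_mono_below m : i_minimal dia i m ->
    forall x y, x <= y -> y <= m -> (mu i x <= mu i y)%R.
  move=> mm x y xy ym; apply: mu_mono => //; apply/in_mindownP; exists m => //.
  exact: le_trans ym.
split.
- move=> x /in_mindownP [m mm xm]; rewrite (mu_supE mm xm) subr_ge0.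
  apply: (mu_mono_below m mm); first exact: leI2 (lexx x) (join_mb_le Phi a).
  exact: le_trans (leIl _ _) xm.
- move=> x y _ /in_mindownP [m mm ym] xy.
  rewrite (mu_supE mm (le_trans xy ym)) (mu_supE mm ym).
  exact: le_sub_meet (mu_modular m mm) (mu_mono_below m mm) _ _ _ _ (join_mb_le Phi a) xy ym.
- move=> m mm b c bm cm.
  have bcm : b `|` c <= m by rewrite leUx bm cm.
  rewrite !(mu_supE mm) ?(le_trans (leIl _ _) bm) //.
  rewrite !(modular_below_meet (mu_modular m mm)) //; lra.
- case=> x /in_mindownP [m mm _].
  by rewrite (mu_supE mm (le0x m)) !meet0x subrr.
Qed.

Lemma mu_sup_meet x y : a <= y -> in_mindown dia i x ->
  mu_sup mu i Phi a x = mu_sup mu i Phi a (x `&` y).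
Proof.
move=> ay /in_mindownP [m mm xm].
rewrite (mu_supE mm xm) (mu_supE mm (le_trans (leIl _ _) xm)).
by rewrite -!meetA (meet_idPr ay) (meet_idPr (le_trans (join_mb_le Phi a) ay)).
Qed.

End MuSup.

Theorem proposition5 (Ag : Type) (d : Order.disp_t) (A : finTBDistrLatticeType d)
  (imp : A -> A -> A) (dia box : Ag -> A -> A) (R : realType) (mu : Ag -> A -> R)
  (E : finType) (sim : Ag -> rel E) (P : Ag -> E -> R) (Phi : seq A)
  (pre : 'I_(size Phi) -> E -> R) :
  is_APE_structure imp dia box mu ->
  is_prob_event_structure sim P pre ->
  forall a : A, a \in Phi -> forall i : Ag,
    is_premeasure dia i (mu_sup mu i Phi a) /\
    (forall x y : A, (a <= y)%O -> in_mindown dia i x ->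
       mu_sup mu i Phi a x = mu_sup mu i Phi a (x `&` y)%O).
Proof.
move=> [_ mu_measure] [_ [Phi_nth _ _]] a _ i.
have [[mu_pre _ _] Phi_laminar] := (mu_measure i, laminar_nth Phi_nth).
split; first exact: mu_sup_premeasure.
by move=> x y; apply: mu_sup_meet.
Qed.
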